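(* Let $d,\ell$ be positive integers and let $\Gamma=B(d,\ell)$ be the De Bruijn digraph. Fix $x_1,\ldots,x_{\ell-1}\in\mathbb{Z}_d$, not all equal, and let $X=\{x_1x_2\ldots x_{\ell-1}k : k\in\mathbb{Z}_d\}$. For each $j\in\mathbb{Z}_d$ let $\alpha_j$ be a permutation of $\mathbb{Z}_d=\{0,1,\ldots,d-1\}$. Let $\Gamma'=B'(d,\ell)$ be the digraph obtained from $\Gamma$ by changing the out-going arcs of the vertices of $X$ (all other arcs unchanged) so that every vertex $x_1x_2\ldots x_{\ell-1}k\in X$ is adjacent exactly to the $d$ vertices $$x_2x_3\ldots x_{\ell-1}\,\alpha_j(k)\,j,\qquad j=0,1,\ldots,d-1.$$ Then $\Gamma'$ is a $d$-regular digraph with diameter $\ell$ (the same as that of $B(d,\ell)$), and it is $\ell$-reachable.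
   Context: The De Bruijn digraph $B(d,\ell)$ has as vertices all words $a_1a_2\ldots a_\ell$ of length $\ell$ over the alphabet $\mathbb{Z}_d=\{0,1,\ldots,d-1\}$, and there is an arc from $a_1\ldots a_\ell$ to $b_1\ldots b_\ell$ if and only if $a_2\ldots a_\ell=b_1\ldots b_{\ell-1}$ (loops allowed). A digraph is $d$-regular if every vertex has in-degree and out-degree $d$. A digraph with diameter $D$ is $\ell$-reachable if $\ell$ is the smallest integer $m\ge D$ such that for every ordered pair of vertices $u,v$ there is a walk of length exactly $m$ from $u$ to $v$. *)

From mathcomp Require Import all_boot all_order all_algebra all_fingroup.
Set Implicit Arguments. Unset Strict Implicit. Unset Printing Implicit Defensive.

Definition word (d l : nat) := (l.-tuple 'I_d)%type.

Definition debruijn (d l : nat) : rel (word d l) :=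
  fun u v => behead (val u) == take l.-1 (val v).

Definition inX (d l : nat) (x : seq 'I_d) (u : word d l) : bool :=
  [exists k : 'I_d, val u == rcons x k].

Definition debruijn' (d l : nat) (x : seq 'I_d) (alpha : 'I_d -> {perm 'I_d})
  : rel (word d l) :=
  fun u v => if inX x u then
      [exists k : 'I_d, exists j : 'I_d,
         (val u == rcons x k) && (val v == behead x ++ [:: alpha j k; j])]
    else debruijn u v.

Fixpoint walk (T : finType) (e : rel T) (m : nat) (u v : T) : bool :=
  if m is m'.+1 then [exists w : T, e u w && walk e m' w v] else u == v.

Definition regular (T : finType) (e : rel T) (d : nat) : Prop :=
  forall u : T, #|[set v | e u v]| = d /\ #|[set v | e v u]| = d.

Definition has_diameter (T : finType) (e : rel T) (D : nat) : Prop :=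
  (forall u v : T, exists2 m, m <= D & walk e m u v) /\
  (exists u v : T, forall m, m < D -> ~~ walk e m u v).

Definition reachable (T : finType) (e : rel T) (r : nat) : Prop :=
  exists D, [/\ has_diameter e D, D <= r,
    (forall u v : T, walk e r u v) &
    (forall m, D <= m < r -> exists u v : T, ~~ walk e m u v)].

From mathcomp Require Import all_boot all_order all_algebra all_fingroup.
From mathcomp Require Import zify.
Set Implicit Arguments. Unset Strict Implicit. Unset Printing Implicit Defensive.

(* Write a word as [rcons q k] with [q] its (l-1)-prefix. In B'(d,l), as in
   B(d,l), every arc replaces [q] by [behead q] extended by one letter, so
   from [a^l] no walk of length m < l reaches [b^l] for b <> a; the words
   [a^l] keep their De Bruijn arcs because x is not constant. Conversely a
   walk of length exactly l between any two words is built backwards from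
   its end, choosing each last letter so that the next arc writes the
   required letter (inverting alpha_j at the vertices of X). Out-neighbours
   are parametrised by their last letter and in-neighbours by their first
   letter, which gives d-regularity. B(d,l) is the case alpha_j = id. *)

Lemma eq_walk (T : finType) (e1 e2 : rel T) : e1 =2 e2 ->
  forall m u v, walk e1 m u v = walk e2 m u v.
Proof.
by move=> E; elim=> [|m IH] u v //=; apply: eq_existsb => w; rewrite E IH.
Qed.

Lemma walkS (T : finType) (e : rel T) m u v :
  walk e m.+1 u v = [exists w, e u w && walk e m w v].
Proof. by []. Qed.

Lemma eq_has_diameter (T : finType) (e1 e2 : rel T) D :
  e1 =2 e2 -> has_diameter e1 D -> has_diameter e2 D.
Proof.
move=> E [far [u [v near]]]; split=> [a b|].
  by have [m hm W] := far a b; exists m; rewrite // -(eq_walk E).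
by exists u, v => m /near; rewrite (eq_walk E).
Qed.

Lemma card_set_param (T : finType) (d : nat) (P : pred T)
    (f : 'I_d -> T) (g : T -> 'I_d) :
  cancel f g -> (forall v, P v = (v == f (g v))) -> #|[set v | P v]| = d.
Proof.
move=> fK Pf; have -> : [set v | P v] = f @: setT.
  apply/setP => v; rewrite inE Pf.
  by apply/eqP/imsetP => [->|[j _ ->]]; [exists (g v) | rewrite fK].
by rewrite card_imset ?cardsT ?card_ord //; apply: can_inj fK.
Qed.

Lemma rcons_behead_all (T : eqType) (s : seq T) a :
  rcons (behead s) a = s -> all (pred1 a) s.
Proof.
case: s => [|x t] //=; elim: t x => [|y t IH] x /=.
  by case=> ->; rewrite eqxx.
by case=> <- /IH /andP [-> ->].
Qed.

Lemma tuple_nonconst (T : eqType) k (x : k.-tuple T) :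
  (exists i j : 'I_k, tnth x i != tnth x j) -> forall a, ~~ all (pred1 a) x.
Proof.
case=> i [j ij] a; apply/allP => xa.
by move: ij; rewrite (eqP (xa _ (mem_tnth i x))) (eqP (xa _ (mem_tnth j x))) eqxx.
Qed.

Section ModifiedDeBruijn.
Variables (d n : nat) (hd : 0 < d).
Local Notation l := n.+3.
Let z0 : 'I_d := Ordinal hd.

(* Junk value: a constant word when [size s != l]. *)
Definition word_of (s : seq 'I_d) : word d l := insubd [tuple of nseq l z0] s.

Lemma word_ofK s : size s = l -> val (word_of s) = s.
Proof. by move=> sl; rewrite /word_of val_insubd sl eqxx. Qed.

Lemma eq_word_of s1 s2 : size s1 = l -> size s2 = l ->
  (word_of s1 == word_of s2) = (s1 == s2).
Proof. by move=> h1 h2; rewrite -val_eqE /= !word_ofK. Qed.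

Lemma wordP (P : word d l -> Prop) :
  (forall q k, size q = n.+2 -> P (word_of (rcons q k))) -> forall u, P u.
Proof.
move=> HP u; have sq : size (take n.+2 u) = n.+2 by rewrite size_takel ?size_tuple.
suff -> : u = word_of (rcons (take n.+2 u) (nth z0 u n.+2)) by apply: HP.
apply: val_inj; rewrite word_ofK ?size_rcons ?sq //.
by rewrite -take_nth ?size_tuple // take_oversize // size_tuple.
Qed.

Lemma take_word_of q k : size q = n.+2 -> take n.+2 (word_of (rcons q k)) = q.
Proof. by move=> sq; rewrite word_ofK ?size_rcons ?sq // -cats1 take_size_cat. Qed.

Lemma last_word_of q k : size q = n.+2 -> nth z0 (word_of (rcons q k)) n.+2 = k.
Proof. by move=> sq; rewrite word_ofK ?size_rcons ?sq // nth_rcons sq ltnn eqxx. Qed.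

Lemma head_word_of q k : size q = n.+2 -> nth z0 (word_of (rcons q k)) 0 = nth z0 q 0.
Proof. by move=> sq; rewrite word_ofK ?size_rcons ?sq // nth_rcons sq. Qed.

Lemma debruijnE q k q' j : size q = n.+2 -> size q' = n.+2 ->
  debruijn (word_of (rcons q k)) (word_of (rcons q' j))
  = (q' == rcons (behead q) k).
Proof.
move=> sq sq'; rewrite /debruijn take_word_of // word_ofK ?size_rcons ?sq //.
by case: q sq => // x q _; rewrite eq_sym.
Qed.

Variables (xs : seq 'I_d) (alpha : 'I_d -> {perm 'I_d}).
Hypothesis size_xs : size xs = n.+2.

Definition arc_letter (q : seq 'I_d) (k j : 'I_d) : 'I_d :=
  if q == xs then alpha j k else k.

Local Notation e := (@debruijn' d l xs alpha).

Lemma inX_rcons q k : size q = n.+2 -> inX xs (word_of (rcons q k)) = (q == xs).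
Proof.
move=> sq; apply/existsP/eqP => [[k' /eqP]|->]; last first.
  by exists k; rewrite word_ofK ?size_rcons ?size_xs.
by rewrite word_ofK ?size_rcons ?sq // => /rcons_inj [].
Qed.

Lemma debruijn'E q k q' j : size q = n.+2 -> size q' = n.+2 ->
  e (word_of (rcons q k)) (word_of (rcons q' j))
  = (q' == rcons (behead q) (arc_letter q k j)).
Proof.
move=> sq sq'; rewrite /debruijn' inX_rcons // /arc_letter.
case: eqP => [qxs|_]; last exact: debruijnE.
have catE s a b : s ++ [:: a; b] = rcons (rcons s a) b by rewrite -cats1 cat_rcons.
rewrite !word_ofK ?size_rcons ?sq ?sq' // qxs.
apply/existsP/eqP => [[k' /existsP [j' /andP [/eqP /rcons_inj [<-]]]]|->].
  by rewrite catE => /eqP /rcons_inj [-> <-].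
by exists k; apply/existsP; exists j; rewrite catE !eqxx.
Qed.

Lemma arc_prefix u w : e u w -> take n.+1 w = behead (take n.+2 u).
Proof.
elim/wordP: u => q k sq; elim/wordP: w => q' j sq'.
rewrite debruijn'E // take_word_of // => /eqP q'E.
rewrite word_ofK ?size_rcons ?sq' // q'E -!cats1 -catA.
by rewrite take_size_cat // size_behead sq.
Qed.

Lemma walk_prefix m u v :
  walk e m u v -> drop m (take n.+2 u) = take (n.+2 - m) v.
Proof.
elim: m u => [|m IH] u; first by move/eqP->; rewrite drop0 subn0.
rewrite walkS => /existsP [w /andP [/arc_prefix uw /IH wv]].
have -> : drop m.+1 (take n.+2 u) = drop m (behead (take n.+2 u)).
  by rewrite -drop1 drop_drop addn1.
rewrite -uw.
have [hm|hm] := leqP m n.+1; last first.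
  have -> : n.+2 - m.+1 = 0 by lia.
  by rewrite take0 drop_oversize // size_takel ?size_tuple //; lia.
have drop_take k (s : seq 'I_d) : m <= k -> drop m (take k s) = take (k - m) (drop m s).
  by move=> mk; rewrite take_drop subnK.
rewrite -(take_takel _ (leqnSn n.+1)) drop_take // wv take_takel //; lia.
Qed.

Hypothesis xs_nonconst : forall a, ~~ all (pred1 a) xs.

Definition const_word (a : 'I_d) : word d l := word_of (nseq l a).

Lemma const_wordE a : const_word a = word_of (rcons (nseq n.+2 a) a).
Proof. by rewrite /const_word -cats1 -(nseqD n.+2 1) addn1. Qed.

Lemma const_word_out a w : e (const_word a) w -> take n.+2 w = nseq n.+2 a.
Proof.
have xs_a : (nseq n.+2 a == xs) = false.
  by apply: contraNF (xs_nonconst a) => /eqP <-; apply: all_pred1_nseq.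
elim/wordP: w => q' j sq'; rewrite const_wordE debruijn'E ?size_nseq //.
rewrite /arc_letter xs_a take_word_of // => /eqP ->.
by rewrite -cats1 -(nseqD n.+1 1) addn1.
Qed.

(* For m = l-1 the prefix argument only covers the last l-2 steps; the first
   one is an ordinary De Bruijn arc. *)
Lemma const_word_far a b m :
  a != b -> m < l -> ~~ walk e m (const_word a) (const_word b).
Proof.
move=> ab hm; apply/negP => W.
have takeC c k : k <= n.+2 -> take k (const_word c) = nseq k c.
  by move=> hk; rewrite /const_word word_ofK ?size_nseq // take_nseq // leqW.
have [hm2|hm2] := ltnP m n.+2.
  move: (walk_prefix W); rewrite takeC // takeC ?leq_subr // drop_nseq.
  have -> : n.+2 - m = (n.+1 - m).+1 by lia.
  by case=> ba; rewrite ba eqxx in ab.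
have mE : m = n.+2 by lia.
move: W; rewrite mE walkS => /existsP [w /andP [/const_word_out wa /walk_prefix]].
rewrite wa drop_nseq takeC; last lia.
have -> : n.+2 - n.+1 = 1 by lia.
by case=> ba; rewrite ba eqxx in ab.
Qed.

(* Built backwards from [v]: the letter [c] is chosen so that the arc
   leaving [rcons q c] writes the letter of [v] required next; it is
   forced to be that letter unless [q] is the modified prefix [xs]. *)
Lemma walk_back (v : word d l) m : m < l -> forall q, size q = n.+2 ->
  drop m q = take (n.+2 - m) v ->
  exists2 c, q != xs -> c = nth z0 v (n.+2 - m)
           & walk e m (word_of (rcons q c)) v.
Proof.
elim: m => [|m IH] hm q sq qv.
  exists (nth z0 v n.+2) => //=; apply/eqP/val_inj.
  rewrite word_ofK ?size_rcons ?sq // -[q]drop0 qv subn0.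
  by rewrite -take_nth ?size_tuple // take_oversize // size_tuple.
set t := nth z0 v (n.+2 - m.+1).
set q' := rcons (behead q) t.
have sq' : size q' = n.+2 by rewrite size_rcons size_behead sq.
have q'v : drop m q' = take (n.+2 - m) v.
  rewrite /q' drop_rcons ?size_behead ?sq; last lia.
  rewrite -drop1 drop_drop addn1 qv.
  have -> : n.+2 - m = (n.+2 - m.+1).+1 by lia.
  by rewrite (take_nth z0) // size_tuple; lia.
have [c' _ W] := IH (ltnW hm) q' sq' q'v.
exists (if q == xs then (alpha c')^-1%g t else t); first by move/negbTE->.
rewrite walkS; apply/existsP; exists (word_of (rcons q' c')); rewrite W andbT.
by rewrite debruijn'E // /arc_letter /q'; case: (q == xs); rewrite ?permKV.
Qed.

Lemma walk_length_l u v : walk e l u v.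
Proof.
elim/wordP: u => q k sq.
set q1 := rcons (behead q) (arc_letter q k (nth z0 v 0)).
have sq1 : size q1 = n.+2 by rewrite size_rcons size_behead sq.
have [|c1 c1E W] := walk_back (v := v) (ltnSn n.+2) sq1.
  by rewrite subnn take0 drop_oversize // sq1.
rewrite walkS; apply/existsP; exists (word_of (rcons q1 c1)); rewrite W andbT.
rewrite debruijn'E //.
suff -> : arc_letter q k c1 = arc_letter q k (nth z0 v 0) by [].
rewrite /arc_letter; case: eqP => // qxs; rewrite c1E ?subnn //.
rewrite /q1 /arc_letter qxs eqxx.
by apply/eqP => /rcons_behead_all; apply/negP/xs_nonconst.
Qed.

Lemma out_degree u : #|[set v | e u v]| = d.
Proof.
elim/wordP: u => q k sq.
pose f j := word_of (rcons (rcons (behead q) (arc_letter q k j)) j).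
apply: (@card_set_param _ _ _ f (fun v => nth z0 v n.+2)) => [j|].
  by rewrite last_word_of // size_rcons size_behead sq.
elim/wordP=> q' j sq'; rewrite last_word_of // debruijn'E //.
by rewrite /f eq_word_of ?size_rcons ?size_behead ?sq ?sq' // eqseq_rcons eqxx andbT.
Qed.

Lemma in_degree v : #|[set u | e u v]| = d.
Proof.
elim/wordP: v => q' j sq'.
set t := nth z0 q' n.+1.
pose pre z := z :: take n.+1 q'.
pose f z := word_of (rcons (pre z) (if pre z == xs then (alpha j)^-1%g t else t)).
have spre z : size (pre z) = n.+2 by rewrite /= size_takel // sq'.
apply: (@card_set_param _ _ _ f (fun u => nth z0 u 0)) => [z|].
  by rewrite head_word_of.
elim/wordP=> q k sq; rewrite head_word_of // debruijn'E //.
rewrite /f eq_word_of ?size_rcons ?sq ?spre // eqseq_rcons.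
have q'E : q' = rcons (take n.+1 q') t by rewrite -take_nth ?sq' // take_oversize ?sq'.
have qE : q = nth z0 q 0 :: behead q by case: (q) sq.
have qpre : (q == pre (nth z0 q 0)) = (behead q == take n.+1 q').
  by rewrite /pre {1}qE eqseq_cons eqxx.
rewrite {1}q'E eqseq_rcons qpre [take n.+1 q' == _]eq_sym.
case: eqP => //= bq; have -> : pre (nth z0 q 0) = q by rewrite /pre -bq -qE.
rewrite /arc_letter; case: (q == xs) => //.
by apply/eqP/eqP => [->|->]; rewrite ?permK ?permKV.
Qed.

Lemma debruijn'_regular : regular e d.
Proof. by move=> u; rewrite out_degree in_degree. Qed.

Lemma debruijn'_diameter : has_diameter e l.
Proof.
split=> [u v|]; first by exists l; rewrite ?walk_length_l.
have [b _ bz] := allPn (xs_nonconst z0).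
by exists (const_word z0), (const_word b) => m; apply: const_word_far; rewrite eq_sym.
Qed.

Lemma debruijn'_reachable : reachable e l.
Proof.
exists l; split=> //; [exact: debruijn'_diameter | exact: walk_length_l |].
by move=> m /andP [lm ml]; rewrite leqNgt ml in lm.
Qed.

End ModifiedDeBruijn.

Lemma debruijn'_perm1 d n (hd : 0 < d) (xs : seq 'I_d) : size xs = n.+2 ->
  @debruijn' d n.+3 xs (fun _ => 1%g) =2 @debruijn d n.+3.
Proof.
move=> sx u v; elim/wordP: u => q k sq; elim/wordP: v => q' j sq'.
by rewrite debruijn'E // debruijnE // /arc_letter perm1 if_same.
Qed.

Theorem mainTheorem6 (d l : nat) (hd : 0 < d) (hl : 0 < l)
  (x : (l.-1).-tuple 'I_d)
  (hx : exists i j : 'I_(l.-1), tnth x i != tnth x j)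
  (alpha : 'I_d -> {perm 'I_d}) :
  regular (@debruijn' d l x alpha) d /\
  has_diameter (@debruijn' d l x alpha) l /\
  has_diameter (@debruijn d l) l /\
  reachable (@debruijn' d l x alpha) l.
Proof.
case: l hl x hx => [//|[|[|n]]] _ x hx.
- by case: hx => -[].
- by case: hx => i [j]; rewrite !ord1 eqxx.
have sx : size x = n.+2 := size_tuple x.
have nc := tuple_nonconst hx.
split; first exact: debruijn'_regular.
split; first exact: debruijn'_diameter.
split; last exact: debruijn'_reachable.
apply: eq_has_diameter (debruijn'_perm1 hd sx) _.
exact: (debruijn'_diameter hd (fun _ => 1%g) sx nc).
Qed.
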